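(* Let $S$ be a numerical semigroup such that $S = \mathcal{S}(A)$ for some $A \in \mathsf{M}_d(\mathbb{Q})$, and suppose $g = \gcd \mathfrak{s}(S) \geq 2$. Then $S/g = \{ n \in \mathbb{N} : gn \in S\}$ satisfies $S/g = \mathcal{S}(B)$ for some $B \in \mathsf{M}_d(\mathbb{Q})$.
   Context: $\mathbb{N} = \{0,1,2,\ldots\}$. A numerical semigroup is an additive subsemigroup of $\mathbb{N}$ containing $0$ with finite complement in $\mathbb{N}$; its Frobenius number $F(S)$ is the largest element of $\mathbb{N}\setminus S$. The set of nonzero small elements is $\mathfrak{s}(S) = \{ n \in S \setminus \{0\} : n < F(S)\}$. $\mathsf{M}_d(X)$ denotes the $d\times d$ matrices with entries in $X$. For $A \in \mathsf{M}_d(\mathbb{Q})$, $\mathcal{S}(A) = \{ n \in \mathbb{N} : A^n \in \mathsf{M}_d(\mathbb{Z})\}$. *)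

From mathcomp Require Import all_boot all_order all_algebra.
Set Implicit Arguments. Unset Strict Implicit. Unset Printing Implicit Defensive.
Import Order.TTheory GRing.Theory Num.Theory.
Local Open Scope ring_scope.

Definition numerical_semigroup (S : pred nat) : Prop :=
  [/\ S 0%N,
      (forall m n, S m -> S n -> S (m + n)%N)
    & exists N, forall n, (N <= n)%N -> S n].

Definition is_frobenius (S : pred nat) (f : nat) : Prop :=
  ~~ S f /\ forall m, (f < m)%N -> S m.

(* small elements s(S) = { n in S \ {0} : n < F(S) }, given F(S) = f *)
Definition small_elts (S : pred nat) (f : nat) : pred nat :=
  fun n => [&& S n, (0 < n)%N & (n < f)%N].

Definition gcd_small (S : pred nat) (f : nat) : nat :=
  \big[gcdn/0%N]_(n < f | small_elts S f n) n.

Definition intpow_set (d : nat) (A : 'M[rat]_d) : pred nat :=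
  fun n => (A ^+ n) \is a mxOver Num.int.

Definition sg_quot (S : pred nat) (g : nat) : pred nat := fun n => S (g * n)%N.

From mathcomp Require Import all_boot all_order all_algebra.
Local Open Scope ring_scope.

Lemma intpow_setX (d k : nat) (A : 'M[rat]_d) (n : nat) :
  intpow_set (A ^+ k) n = sg_quot (intpow_set A) k n.
Proof. by rewrite /sg_quot /intpow_set GRing.exprM. Qed.

Theorem theorem3p2 (d : nat) (S : pred nat) (A : 'M[rat]_d) (f : nat) :
  numerical_semigroup S ->
  (forall n, S n = intpow_set A n) ->
  is_frobenius S f ->
  (2 <= gcd_small S f)%N ->
  exists B : 'M[rat]_d,
    forall n, sg_quot S (gcd_small S f) n = intpow_set B n.
Proof.
(* [S(A^k) = S(A)/k] holds for every [k]. *)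
move=> _ SE _ _; exists (A ^+ gcd_small S f) => n.
by rewrite intpow_setX /sg_quot SE.
Qed.
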